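(* Let $k\ge3$ and let $\sigma,\tau\in\mathfrak S_{k-2}$ be consecutive patterns with $A_\sigma(z)=A_\tau(z)$. Then $A_{1\text{-}\sigma\text{-}k}(z)=A_{1\text{-}\tau\text{-}k}(z)$, where for $\sigma=\sigma_1\cdots\sigma_{k-2}$, $1\text{-}\sigma\text{-}k$ denotes the generalized pattern $1\text{-}(\sigma_1+1)\cdots(\sigma_{k-2}+1)\text{-}k$. In particular $A_{1\text{-}23\text{-}4}(z)=A_{1\text{-}32\text{-}4}(z)$.
   Context: $\mathfrak S_n$ is the symmetric group on $\{1,\dots,n\}$, permutations in one-line notation. A generalized pattern of length $m$ is a permutation $\sigma_1\cdots\sigma_m\in\mathfrak S_m$ with, between each pair of adjacent entries, either a dash ''-'' or nothing. A permutation $\pi\in\mathfrak S_n$ contains it if there are indices $i_1<\dots<i_m$ with $i_{j+1}=i_j+1$ whenever there is no dash between $\sigma_j$ and $\sigma_{j+1}$, and with $\pi_{i_a}<\pi_{i_b}$ iff $\sigma_a<\sigma_b$ for all $a,b$; otherwise $\pi$ avoids it. A consecutive pattern has no dashes. $\alpha_n(\sigma)$ is the number of permutations in $\mathfrak S_n$ avoiding $\sigma$ ($\alpha_0=1$) and $A_\sigma(z)=\sum_{n\ge0}\alpha_n(\sigma)z^n/n!$. *)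

From mathcomp Require Import all_boot all_order all_algebra all_fingroup.
Set Implicit Arguments. Unset Strict Implicit. Unset Printing Implicit Defensive.
Import GRing.Theory.

(* A generalized pattern of length m: one-line word w = sigma_1 ... sigma_m
   (1-based values) and a list d of m-1 booleans, d_j = true iff there is a
   dash between sigma_(j+1) and sigma_(j+2) (0-based j). *)
Definition gpat := (seq nat * seq bool)%type.

Definition gcontains (P : gpat) (n : nat) (pi : 'S_n) : bool :=
  let w := P.1 in let d := P.2 in
  [exists f : {ffun 'I_(size w) -> 'I_n},
     [forall a : 'I_(size w), forall b : 'I_(size w),
        ((a < b)%N ==> (f a < f b)%N) &&
        (((pi (f a) : nat) < pi (f b))%N == (nth 0 w a < nth 0 w b)%N)] &&
     [forall a : 'I_(size w), forall b : 'I_(size w),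
        (((b : nat) == a.+1) && ~~ nth true d a) ==> ((f b : nat) == (f a).+1)]].

Definition alpha (P : gpat) (n : nat) : nat :=
  #|[set pi : 'S_n | ~~ gcontains P pi]|.

(* The exponential generating function A_P(z), as a formal power series,
   i.e. its coefficient sequence alpha_n(P)/n!. *)
Definition egf (P : gpat) : nat -> rat :=
  fun n => ((alpha P n)%:R / (n`!)%:R)%R.

Definition oneline (m : nat) (s : 'S_m) : seq nat :=
  [seq (s i).+1 | i <- enum 'I_m].

Definition consec_pat (m : nat) (s : 'S_m) : gpat :=
  (oneline s, nseq m.-1 false).

Definition wrap_pat (k : nat) (s : 'S_(k - 2)) : gpat :=
  (1 :: [seq x.+1 | x <- oneline s] ++ [:: k],
   true :: nseq (k - 3) false ++ [:: true]).

From mathcomp Require Import all_boot all_order all_algebra all_fingroup.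
From mathcomp Require Import zify.
From Stdlib Require Import FunctionalExtensionality.
Set Implicit Arguments. Unset Strict Implicit. Unset Printing Implicit Defensive.

(* Call a position of a permutation a record if it is a left-to-right minimum
   or a right-to-left maximum. An occurrence of 1-sigma-k is the same thing as a
   consecutive occurrence of sigma inside a maximal run of non-record positions:
   the outer letters can always be taken to be a smaller value before the run and
   a larger value after it. Permuting the values inside such a run does not change
   which positions are records. Equal generating functions for sigma and tau give,
   for every length, an injection from sigma-avoiders into tau-avoiders; applying
   it to the standardisation of each run in turn, left to right, injects the
   1-sigma-k-avoiders into the 1-tau-k-avoiders, and symmetry gives equality.
   Complementation exchanges the consecutive patterns 12 and 21, which yields the
   case 1-23-4 versus 1-32-4. *)

Lemma take_size_cat_add (T : Type) (A Y : seq T) p :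
  take (size A + p) (A ++ Y) = A ++ take p Y.
Proof. by elim: A => //= x A ->. Qed.

Lemma drop_size_cat_add (T : Type) (A Y : seq T) p :
  drop (size A + p) (A ++ Y) = drop p Y.
Proof. by elim: A. Qed.

Lemma nth_size_cat_add (T : Type) x0 (A Y : seq T) p :
  nth x0 (A ++ Y) (size A + p) = nth x0 Y p.
Proof. by elim: A. Qed.

Lemma dropl_cat (T : Type) (A Y : seq T) p :
  p <= size A -> drop p (A ++ Y) = drop p A ++ Y.
Proof. elim: A p => [|x A IH] [|p] //=; [by rewrite drop0 | by move/IH ->]. Qed.

Lemma mem_take_nth (s : seq nat) i p : p < i -> p < size s -> nth 0 s p \in take i s.
Proof. by move=> lt_pi lt_ps; rewrite -(nth_take 0 lt_pi) mem_nth // size_take; case: ifP. Qed.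

Lemma mem_drop_nth (s : seq nat) i p : i <= p -> p < size s -> nth 0 s p \in drop i s.
Proof.
move=> le_ip lt_ps; rewrite -(subnKC le_ip) -nth_drop mem_nth // size_drop.
by rewrite ltn_sub2r // (leq_ltn_trans le_ip).
Qed.

Lemma nth_argmin (r : seq nat) : 0 < size r ->
  exists2 p, p < size r & forall q, q < size r -> nth 0 r p <= nth 0 r q.
Proof.
move=> r0; case: (arg_minnP (fun i : 'I_(size r) => nth 0 r i) (isT : predT (Ordinal r0))).
by move=> p _ min_p; exists p => // q lt_q; exact: (min_p (Ordinal lt_q)).
Qed.

Lemma nth_argmax (r : seq nat) : 0 < size r ->
  exists2 p, p < size r & forall q, q < size r -> nth 0 r q <= nth 0 r p.
Proof.
move=> r0; case: (arg_maxnP (fun i : 'I_(size r) => nth 0 r i) (isT : predT (Ordinal r0))).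
by move=> p _ max_p; exists p => // q lt_q; exact: (max_p (Ordinal lt_q)).
Qed.

Definition ltr_min (s : seq nat) i := all (fun x => nth 0 s i < x) (take i s).
Definition rtl_max (s : seq nat) i := all (fun x => x < nth 0 s i) (drop i.+1 s).
Definition record s i := ltr_min s i || rtl_max s i.

Lemma record_oversize s i : size s <= i -> record s i.
Proof. by move=> le_si; rewrite /record /rtl_max drop_oversize ?orbT //; lia. Qed.

Lemma nonrecord_ltn_size s i : ~~ record s i -> i < size s.
Proof. by apply: contraR; rewrite -leqNgt; apply: record_oversize. Qed.

Section NonRecordBlock.
Variables (A r B : seq nat).
Hypothesis block_nonrecord :
  forall i, size A <= i < size A + size r -> ~~ record (A ++ r ++ B) i.

Lemma block_below p : p < size r -> exists2 x, x \in A & x <= nth 0 r p.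
Proof.
elim/ltn_ind: p => p IH lt_pr.
have := block_nonrecord (i := size A + p); rewrite leq_addr ltn_add2l => /(_ lt_pr).
rewrite /record negb_or => /andP [+ _].
rewrite /ltr_min nth_size_cat_add take_size_cat_add nth_cat lt_pr takel_cat ?(ltnW lt_pr) //.
case/allPn => x; rewrite mem_cat -leqNgt => /orP [xA le_x|x_r le_x]; first by exists x.
case/(nthP 0): x_r => q; rewrite size_take lt_pr => lt_qp Eq.
rewrite -Eq nth_take // in le_x.
have [y yA le_y] := IH q lt_qp (ltn_trans lt_qp lt_pr).
by exists y => //; apply: leq_trans le_y le_x.
Qed.

Lemma block_above p : p < size r -> exists2 y, y \in B & nth 0 r p <= y.
Proof.
move Ed: (size r - p) => d; elim/ltn_ind: d p Ed => d IH p Ed lt_pr.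
have := block_nonrecord (i := size A + p); rewrite leq_addr ltn_add2l => /(_ lt_pr).
rewrite /record negb_or => /andP [_ +].
rewrite /rtl_max nth_size_cat_add -addnS drop_size_cat_add nth_cat lt_pr dropl_cat //.
case/allPn => x; rewrite mem_cat -leqNgt => /orP [x_r le_x|xB le_x]; last by exists x.
case/(nthP 0): x_r => q; rewrite size_drop => lt_q Eq; rewrite -Eq nth_drop in le_x.
change (is_true (q < size r - p.+1)) in lt_q.
have lt_pqr : p.+1 + q < size r by lia.
have [y yB le_y] := IH (size r - (p.+1 + q)) ltac:(lia) (p.+1 + q) erefl lt_pqr.
by exists y => //; apply: leq_trans le_y.
Qed.

Lemma block_lower_bound :
  0 < size r -> exists2 x, x \in A & forall q, q < size r -> x <= nth 0 r q.
Proof.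
case/nth_argmin => p lt_pr min_p; have [x xA le_x] := block_below lt_pr.
by exists x => // q /min_p; apply: leq_trans.
Qed.

Lemma block_upper_bound :
  0 < size r -> exists2 y, y \in B & forall q, q < size r -> nth 0 r q <= y.
Proof.
case/nth_argmax => p lt_pr max_p; have [y yB le_y] := block_above lt_pr.
by exists y => // q /max_p /leq_trans; apply.
Qed.

(* Records outside the block only see the block as a multiset, and no value of a
   permuted block can become a record since the bounds above survive. *)
Lemma record_perm_block r' : perm_eq r r' ->
  forall i, record (A ++ r' ++ B) i = record (A ++ r ++ B) i.
Proof.
move=> pr i; have sz : size r' = size r by rewrite (perm_size pr).
case: (ltnP i (size A)) => hA.
  rewrite /record /ltr_min /rtl_max !nth_cat hA !takel_cat ?(ltnW hA) //.
  rewrite !dropl_cat //; congr (_ || _); apply: perm_all.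
  by rewrite perm_cat2l perm_cat2r perm_sym.
case: (ltnP i (size A + size r)) => hB.
  have -> : record (A ++ r ++ B) i = false by apply/negbTE/block_nonrecord; rewrite hA hB.
  have r0 : 0 < size r by lia.
  have {hA hB} [p -> lt_pr] : exists2 p, i = size A + p & p < size r.
    by exists (i - size A); lia.
  have : nth 0 r' p \in r by rewrite (perm_mem pr) mem_nth // sz.
  case/(nthP 0) => q lt_qr Eq.
  have [x xA le_x] := block_lower_bound r0; have [y yB le_y] := block_upper_bound r0.
  rewrite /record /ltr_min /rtl_max nth_size_cat_add nth_cat sz lt_pr take_size_cat_add.
  rewrite -addnS drop_size_cat_add dropl_cat ?sz //; apply/negP => /orP [] /allP.
    by move/(_ x); rewrite mem_cat xA -Eq => /(_ isT); rewrite ltnNge le_x.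
  by move/(_ y); rewrite !mem_cat yB orbT -Eq => /(_ isT); rewrite ltnNge le_y.
have {hA hB} [p ->] : exists p, i = size A + size r + p by exists (i - (size A + size r)); lia.
have recordE X : record (A ++ X ++ B) (size A + size X + p) =
    all (fun x => nth 0 B p < x) (A ++ X ++ take p B)
    || all (fun x => x < nth 0 B p) (drop p.+1 B).
  rewrite /record /ltr_min /rtl_max -addnA !nth_size_cat_add !take_size_cat_add.
  by rewrite -addnS !drop_size_cat_add -addnS drop_size_cat_add.
rewrite -{1}sz !recordE; congr (_ || _).
by apply: perm_all; rewrite perm_cat2l perm_cat2r perm_sym.
Qed.

End NonRecordBlock.

Lemma nonrecord_window_enclosed s j m : uniq s -> 0 < m -> j + m <= size s ->
  (forall i, j <= i < j + m -> ~~ record s i) ->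
  exists q0 q1, [/\ q0 < j, j + m <= q1 < size s,
    forall a, a < m -> nth 0 s q0 < nth 0 s (j + a) &
    forall a, a < m -> nth 0 s (j + a) < nth 0 s q1].
Proof.
move=> us m_gt0 le_js nonrec.
set A := take j s; set r := take m (drop j s); set B := drop (j + m) s.
have decomp : s = A ++ r ++ B by rewrite /A /r /B addnC -drop_drop !cat_take_drop.
have size_A : size A = j by rewrite size_takel //; lia.
have size_r : size r = m by rewrite size_takel // size_drop; lia.
have nth_r a : a < m -> nth 0 r a = nth 0 s (j + a) by move=> lt_a; rewrite nth_take // nth_drop.
have block_nonrec i : size A <= i < size A + size r -> ~~ record (A ++ r ++ B) i.
  by rewrite -decomp size_A size_r; exact: nonrec.
have r_gt0 : 0 < size r by rewrite size_r.
have [x xA x_le] := block_lower_bound block_nonrec r_gt0.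
have [y yB y_ge] := block_upper_bound block_nonrec r_gt0.
case/(nthP 0): xA => q0; rewrite size_A => lt_q0 Ex; rewrite nth_take // in Ex.
case/(nthP 0): yB => q1; rewrite size_drop => lt_q1 Ey; rewrite nth_drop in Ey.
have neq_pos i i' : i < size s -> i' < size s -> i != i' -> nth 0 s i != nth 0 s i'.
  by move=> lt_i lt_i'; rewrite nth_uniq.
exists q0, (j + m + q1); split=> [||a lt_a|a lt_a]; try lia.
  by rewrite ltn_neqAle neq_pos ?Ex -?nth_r ?x_le ?size_r //; lia.
by rewrite ltn_neqAle neq_pos ?Ey -?nth_r ?y_ge ?size_r //; lia.
Qed.

Definition starts_run s t := (t == 0) || record s t.-1.

Fixpoint run_start s i :=
  if i is i'.+1 then (if record s i' then i else run_start s i') else 0.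

Definition run_length s t := find (record s) (iota t (size s - t)).

Lemma run_start_leq s i : run_start s i <= i.
Proof. elim: i => //= i IH; case: ifP => // _; exact: leqW. Qed.

Lemma run_start_nonrecord s i j : run_start s i <= j < i -> ~~ record s j.
Proof.
elim: i => [|i IH] /=; first by rewrite ltn0.
case: ifP => rec_i; first by move=> ?; lia.
case/andP => le_j; rewrite ltnS leq_eqVlt => /orP [/eqP -> | lt_ji]; first by rewrite rec_i.
by apply: IH; rewrite le_j.
Qed.

Lemma starts_run_start s i : starts_run s (run_start s i).
Proof. by elim: i => //= i IH; case: ifP => // rec_i; rewrite /starts_run /= rec_i orbT. Qed.

Lemma run_startE s t i : starts_run s t -> t <= i ->
  (forall j, t <= j < i -> ~~ record s j) -> run_start s i = t.
Proof.
elim: i => [|i IH] start_t; first by rewrite leqn0 => /eqP.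
rewrite leq_eqVlt => /orP [/eqP Et | lt_ti] nonrec /=.
  by move: start_t; rewrite /starts_run Et /= => ->.
have -> : record s i = false by apply/negbTE/nonrec; lia.
by apply: IH => // j /andP [le_tj lt_ji]; apply: nonrec; rewrite le_tj ltnW.
Qed.

Lemma eq_run_start s s' : record s' =1 record s -> run_start s' =1 run_start s.
Proof. by move=> E; elim=> //= i ->; rewrite E. Qed.

Lemma run_length_nonrecord s t i : t <= i < t + run_length s t -> ~~ record s i.
Proof.
case/andP => le_ti lt_i; have lt_it : i - t < run_length s t by lia.
have := before_find 0 lt_it; rewrite nth_iota ?subnKC // => [-> //|].
apply: leq_trans lt_it _; apply: leq_trans (find_size _ _) _; by rewrite size_iota.
Qed.

Lemma run_length_bound s t : t + run_length s t <= size s \/ size s < t.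
Proof.
case: (ltnP (size s) t) => le_ts; [by right | left].
have := find_size (record s) (iota t (size s - t)); rewrite size_iota /run_length; lia.
Qed.

Lemma record_run_end s t : t + run_length s t < size s -> record s (t + run_length s t).
Proof.
move=> lt_end; have has_rec : has (record s) (iota t (size s - t)).
  by rewrite has_find size_iota; move: lt_end; rewrite /run_length; lia.
have := nth_find 0 has_rec; rewrite nth_iota //.
by move: has_rec; rewrite has_find size_iota.
Qed.

Lemma run_start_in_run s t i : starts_run s t -> t <= i < t + run_length s t ->
  run_start s i = t.
Proof.
move=> start_t /andP [le_ti lt_i]; apply: run_startE => // j /andP [le_tj lt_ji].
by apply: (@run_length_nonrecord s t); lia.
Qed.

Lemma nonrecord_in_run s t j : starts_run s t -> ~~ record s j -> run_start s j = t ->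
  j < t + run_length s t.
Proof.
move=> start_t nonrec_j Ej; have lt_js := nonrecord_ltn_size nonrec_j.
have le_tj : t <= j by rewrite -Ej run_start_leq.
rewrite ltnNge; apply/negP => le_end.
have lt_end : t + run_length s t < size s by lia.
have := record_run_end lt_end; apply/negP.
move: le_end; rewrite leq_eqVlt => /orP [/eqP -> //|lt_endj].
by apply: (@run_start_nonrecord s j); rewrite Ej leq_addr lt_endj.
Qed.

Lemma run_start_nonrecord_block s j m : (forall a, a < m -> ~~ record s (j + a)) ->
  forall a, a < m -> run_start s (j + a) = run_start s j.
Proof.
move=> nonrec a lt_am; apply: run_startE; first exact: starts_run_start.
  exact: leq_trans (run_start_leq s j) (leq_addr _ _).
move=> x /andP [le_x lt_x]; case: (ltnP x j) => [lt_xj|le_jx].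
  by apply: (@run_start_nonrecord s j); rewrite le_x.
by rewrite -(subnKC le_jx); apply: nonrec; lia.
Qed.

Lemma eq_run_length s s' t : size s' = size s -> record s' =1 record s ->
  run_length s' t = run_length s t.
Proof. by move=> Es E; rewrite /run_length Es; apply: eq_find => i; rewrite E. Qed.

Definition occurs_at (w x : seq nat) j :=
  all (fun a => all (fun b =>
    (nth 0 x (j + a) < nth 0 x (j + b)) == (nth 0 w a < nth 0 w b))
  (iota 0 (size w))) (iota 0 (size w)).

Definition inner_occurrence w s j :=
  [&& j + size w <= size s, all (fun i => ~~ record s i) (iota j (size w)) & occurs_at w s j].

Definition ccontains w q :=
  has (fun j => (j + size w <= size q) && occurs_at w q j) (iota 0 (size q)).

Definition consec_avoid w q := ~~ ccontains w q.

(* The invariant of the proof: occurrences in runs starting before [t] are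
   measured against [w2], those in later runs against [w1]. *)
Definition mixed_avoid w1 w2 t s :=
  all (fun j => ~~ inner_occurrence (if run_start s j < t then w2 else w1) s j)
    (iota 0 (size s)).

Lemma eq_occurs_at w x y j j' :
  (forall a b, a < size w -> b < size w ->
     (nth 0 x (j + a) < nth 0 x (j + b)) = (nth 0 y (j' + a) < nth 0 y (j' + b))) ->
  occurs_at w x j = occurs_at w y j'.
Proof.
move=> E; apply: eq_in_all => a; rewrite mem_iota add0n => /andP [_ lt_a].
by apply: eq_in_all => b; rewrite mem_iota add0n => /andP [_ lt_b]; rewrite E.
Qed.

Lemma occurs_at_map (f : nat -> nat) w q j :
  {in q &, forall x y, (f x < f y) = (x < y)} -> j + size w <= size q ->
  occurs_at w (map f q) j = occurs_at w q j.
Proof.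
move=> f_mono le_wq; apply: eq_occurs_at => a b lt_a lt_b.
have [lt_ja lt_jb] : j + a < size q /\ j + b < size q by split; lia.
by rewrite !(nth_map 0) // f_mono // mem_nth.
Qed.

Lemma inner_occurrence_nonrecord w s j :
  inner_occurrence w s j -> forall a, a < size w -> ~~ record s (j + a).
Proof. by case/and3P => _ /allP nonrec _ a lt_a; apply: nonrec; rewrite mem_iota; lia. Qed.

Lemma eq_inner_occurrence w x y j : size x = size y -> record x =1 record y ->
  (forall a, a < size w -> nth 0 x (j + a) = nth 0 y (j + a)) ->
  inner_occurrence w x j = inner_occurrence w y j.
Proof.
move=> Es Er En; rewrite /inner_occurrence Es; congr [&& _, _ & _].
  by apply: eq_all => i; rewrite Er.
by apply: eq_occurs_at => a b lt_a lt_b; rewrite !En.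
Qed.

Definition std (r : seq nat) := [seq index x (sort leq r) | x <- r].
Definition std_map (b : seq nat -> seq nat) r := [seq nth 0 (sort leq r) i | i <- b (std r)].

Lemma nth_sort_mono r i j : uniq r -> i < size r -> j < size r ->
  (nth 0 (sort leq r) i < nth 0 (sort leq r) j) = (i < j).
Proof.
move=> ur lt_i lt_j.
have sorted_r : sorted ltn (sort leq r).
  by rewrite ltn_sorted_uniq_leq sort_uniq ur sort_sorted //; exact: leq_total.
have mono i' j' : i' < size r -> j' < size r -> i' < j' ->
    nth 0 (sort leq r) i' < nth 0 (sort leq r) j'.
  by move=> *; apply: (sorted_ltn_nth ltn_trans) => //; rewrite inE size_sort.
case: (ltngtP i j) => [lt_ij|lt_ji|->]; first exact: mono.
  by apply/negbTE; rewrite -leqNgt ltnW // mono.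
by rewrite ltnn.
Qed.

Lemma index_sort_mono r : uniq r ->
  {in r &, forall x y, (index x (sort leq r) < index y (sort leq r)) = (x < y)}.
Proof.
move=> ur x y xr yr; rewrite -[x in RHS](nth_index 0 (_ : x \in sort leq r)) ?mem_sort //.
rewrite -[y in RHS](nth_index 0 (_ : y \in sort leq r)) ?mem_sort //.
by rewrite nth_sort_mono // -(size_sort leq) index_mem mem_sort.
Qed.

Lemma std_perm r : uniq r -> perm_eq (std r) (iota 0 (size r)).
Proof.
move=> ur; apply: (@perm_trans _ [seq index x (sort leq r) | x <- sort leq r]).
  by apply: perm_map; rewrite perm_sym perm_sort.
have -> // : [seq index x (sort leq r) | x <- sort leq r] = iota 0 (size r).
apply: (@eq_from_nth _ 0); first by rewrite size_map size_iota size_sort.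
move=> i; rewrite size_map size_sort => lt_i.
by rewrite (nth_map 0) ?size_sort // index_uniq ?sort_uniq ?size_sort // nth_iota.
Qed.

Lemma std_map_perm b r : perm_eq (b (std r)) (iota 0 (size r)) -> perm_eq (std_map b r) r.
Proof.
move=> perm_b; apply: (@perm_trans _ [seq nth 0 (sort leq r) i | i <- iota 0 (size r)]).
  exact: perm_map.
by rewrite -(size_sort leq) -/(mkseq _ _) mkseq_nth perm_sort.
Qed.

Lemma std_map_id r : [seq nth 0 (sort leq r) i | i <- std r] = r.
Proof. by rewrite -map_comp; apply: map_id_in => x xr /=; rewrite nth_index ?mem_sort. Qed.

Lemma map_nth_inj (V q1 q2 : seq nat) : uniq V -> all (fun i => i < size V) q1 ->
  all (fun i => i < size V) q2 -> size q1 = size q2 ->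
  [seq nth 0 V i | i <- q1] = [seq nth 0 V i | i <- q2] -> q1 = q2.
Proof.
move=> uV /allP q1V /allP q2V Es E; apply: (@eq_from_nth _ 0) => // i lt_i1.
have lt_i2 : i < size q2 by rewrite -Es.
have := congr1 (nth 0 ^~ i) E; rewrite /= !(nth_map 0) // => /eqP.
by rewrite nth_uniq ?(q1V _ (mem_nth 0 lt_i1)) ?(q2V _ (mem_nth 0 lt_i2)) // => /eqP.
Qed.

Lemma occurs_at_std w r j : uniq r -> j + size w <= size r ->
  occurs_at w (std r) j = occurs_at w r j.
Proof. by move=> ur le_wr; apply: occurs_at_map => //; exact: index_sort_mono. Qed.

Lemma occurs_at_std_map b w r j : uniq r -> perm_eq (b (std r)) (iota 0 (size r)) ->
  j + size w <= size r -> occurs_at w (std_map b r) j = occurs_at w (b (std r)) j.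
Proof.
move=> ur perm_b le_wr; apply: occurs_at_map; last by rewrite (perm_size perm_b) size_iota.
move=> x y; rewrite !(perm_mem perm_b) !mem_iota => /andP [_ lt_x] /andP [_ lt_y].
exact: nth_sort_mono.
Qed.

Definition perms n := permutations (iota 0 n).

Lemma perms_size q l : q \in perms l -> size q = l.
Proof. by rewrite mem_permutations => /perm_size ->; rewrite size_iota. Qed.

Lemma perms_uniq q l : q \in perms l -> uniq q.
Proof. by rewrite mem_permutations => /perm_uniq ->; rewrite iota_uniq. Qed.

Lemma std_perms r : uniq r -> std r \in perms (size (std r)).
Proof. by move=> ur; rewrite mem_permutations size_map std_perm. Qed.

Lemma count_leq_inj (L : seq (seq nat)) (P Q : pred (seq nat)) (f : seq nat -> seq nat) :
  uniq L -> {in L, forall x, P x -> (f x \in L) && Q (f x)} ->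
  {in [pred x in L | P x] &, injective f} -> count P L <= count Q L.
Proof.
move=> uL f_into f_inj; rewrite -!size_filter -(size_map f); apply: uniq_leq_size.
  rewrite map_inj_in_uniq ?filter_uniq // => x y.
  by rewrite !mem_filter => /andP [Px Lx] /andP [Py Ly]; apply: f_inj; rewrite inE ?Px ?Lx ?Py ?Ly.
move=> y /mapP [x]; rewrite mem_filter => /andP [Px Lx] ->.
by have /andP [fxL Qfx] := f_into x Lx Px; rewrite mem_filter fxL Qfx.
Qed.

Section Transfer.
Variables P Q : pred (seq nat).
Hypothesis count_PQ : forall l, count P (perms l) <= count Q (perms l).

Definition transfer q :=
  nth q (filter Q (perms (size q))) (index q (filter P (perms (size q)))).

Lemma transfer_perms q : q \in perms (size q) -> transfer q \in perms (size q).
Proof.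
move=> qP; rewrite /transfer; case: (ltnP (index q (filter P (perms (size q))))
  (size (filter Q (perms (size q))))) => [lt_i|le_i]; last by rewrite nth_default.
by have := mem_nth q lt_i; rewrite mem_filter => /andP [].
Qed.

Lemma transferP q : q \in perms (size q) -> P q ->
  (transfer q \in perms (size q)) && Q (transfer q).
Proof.
move=> qP Pq; rewrite /transfer.
have lt_i : index q (filter P (perms (size q))) < size (filter Q (perms (size q))).
  rewrite size_filter; apply: leq_trans (count_PQ (size q)).
  by rewrite -size_filter index_mem mem_filter Pq.
by have := mem_nth q lt_i; rewrite mem_filter => /andP [-> ->].
Qed.

Lemma transfer_inj q1 q2 : q1 \in perms (size q1) -> P q1 -> q2 \in perms (size q2) -> P q2 ->
  transfer q1 = transfer q2 -> q1 = q2.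
Proof.
move=> q1P Pq1 q2P Pq2 E.
have [/andP [t1P _] /andP [t2P _]] := (transferP q1P Pq1, transferP q2P Pq2).
have El : size q1 = size q2 by rewrite -(perms_size t1P) -(perms_size t2P) E.
move: E; rewrite /transfer El.
set F := filter P (perms (size q2)).
have q1F : q1 \in F by rewrite mem_filter Pq1 -El.
have q2F : q2 \in F by rewrite mem_filter Pq2.
have lt_iQ x : x \in F -> index x F < size (filter Q (perms (size q2))).
  move=> xF; rewrite size_filter; apply: leq_trans (count_PQ _).
  by rewrite -size_filter index_mem.
rewrite (set_nth_default q2 q1) ?lt_iQ // => /eqP.
rewrite nth_uniq ?lt_iQ ?filter_uniq ?permutations_uniq // => /eqP Ei.
by rewrite -(nth_index q1 q1F) Ei nth_index.
Qed.

End Transfer.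

Section RearrangeRun.
Variables w1 w2 : seq nat.
Hypothesis w2_gt0 : 0 < size w2.
Let avoid1 := consec_avoid w1.
Let avoid2 := consec_avoid w2.
Hypothesis count_avoid : forall l, count avoid1 (perms l) <= count avoid2 (perms l).
Let tr := transfer avoid1 avoid2.

Lemma transfer_std_perm r : uniq r -> perm_eq (tr (std r)) (iota 0 (size r)).
Proof.
move=> ur; have := transfer_perms avoid1 avoid2 (std_perms ur).
by rewrite mem_permutations size_map.
Qed.

Lemma std_map_transfer_perm r : uniq r -> perm_eq (std_map tr r) r.
Proof. by move=> ur; apply: std_map_perm; apply: transfer_std_perm. Qed.

Lemma std_map_transfer_inj r1 r2 : uniq r1 -> uniq r2 -> avoid1 (std r1) -> avoid1 (std r2) ->
  std_map tr r1 = std_map tr r2 -> r1 = r2.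
Proof.
move=> u1 u2 av1 av2 E.
have perm12 : perm_eq r1 r2.
  apply: perm_trans (std_map_transfer_perm u2).
  by rewrite -E perm_sym std_map_transfer_perm.
have sort12 : sort leq r1 = sort leq r2.
  by apply/perm_sortP => //; [exact: leq_total | exact: leq_trans | exact: anti_leq].
have [P1 P2] := (transfer_std_perm u1, transfer_std_perm u2).
have size12 := perm_size perm12.
have E' : tr (std r1) = tr (std r2).
  move: E; rewrite /std_map sort12; apply: map_nth_inj; first by rewrite sort_uniq.
  - by apply/allP => x; rewrite (perm_mem P1) mem_iota size_sort size12.
  - by apply/allP => x; rewrite (perm_mem P2) mem_iota size_sort.
  - by rewrite (perm_size P1) (perm_size P2) !size_iota size12.
have Estd := transfer_inj count_avoid (std_perms u1) av1 (std_perms u2) av2 E'.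
by rewrite -(std_map_id r1) -(std_map_id r2) sort12 Estd.
Qed.

Definition rearrange_run t s :=
  if starts_run s t && (t < size s) then
    take t s ++ std_map tr (take (run_length s t) (drop t s)) ++ drop (t + run_length s t) s
  else s.

Section AtRun.
Variables (s : seq nat) (t : nat).
Hypotheses (us : uniq s) (start_t : starts_run s t && (t < size s)).
Local Notation l := (run_length s t).
Local Notation run := (take (run_length s t) (drop t s)).

Lemma run_bound : t + l <= size s.
Proof. by case/andP: start_t => _ lt_ts; case: (run_length_bound s t) => //; lia. Qed.

Lemma size_run : size run = l.
Proof. by rewrite size_take size_drop; have := run_bound; case: ifP; lia. Qed.

Lemma uniq_run : uniq run.
Proof. by rewrite take_uniq // drop_uniq. Qed.

Lemma size_take_start : size (take t s) = t.
Proof. by case/andP: start_t => _ lt_ts; rewrite size_take lt_ts. Qed.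

Lemma run_decomp : s = take t s ++ run ++ drop (t + l) s.
Proof. by rewrite addnC -drop_drop !cat_take_drop. Qed.

Lemma rearrange_runE : rearrange_run t s = take t s ++ std_map tr run ++ drop (t + l) s.
Proof. by rewrite /rearrange_run start_t. Qed.

Lemma record_rearrange_run_at : record (rearrange_run t s) =1 record s.
Proof.
rewrite rearrange_runE [in record s]run_decomp => i; apply: record_perm_block.
  by rewrite -run_decomp size_take_start size_run => j; exact: run_length_nonrecord.
by rewrite perm_sym std_map_transfer_perm ?uniq_run.
Qed.

Lemma nth_rearrange_run_out p : p < t \/ t + l <= p -> nth 0 (rearrange_run t s) p = nth 0 s p.
Proof.
have size_tr : size (std_map tr run) = l.
  by rewrite (perm_size (std_map_transfer_perm uniq_run)) size_run.
rewrite rearrange_runE => -[lt_pt|le_p].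
  by rewrite nth_cat size_take_start lt_pt nth_take.
have E1 : p = size (take t s) + size (std_map tr run) + (p - (t + l)).
  by rewrite size_take_start size_tr; lia.
have E2 : p = size (take t s) + size run + (p - (t + l)) by rewrite size_take_start size_run; lia.
by rewrite [in RHS]run_decomp {1}E1 {2}E2 -!addnA !nth_size_cat_add.
Qed.

Lemma nth_rearrange_run_in o : o < l ->
  nth 0 (rearrange_run t s) (t + o) = nth 0 (std_map tr run) o.
Proof.
move=> lt_ol; rewrite rearrange_runE -[t in t + o]size_take_start nth_size_cat_add nth_cat.
by rewrite (perm_size (std_map_transfer_perm uniq_run)) size_run lt_ol.
Qed.

Lemma avoid1_std_run : mixed_avoid w1 w2 t s -> avoid1 (std run).
Proof.
move=> av; case/andP: start_t => start _; have le_run := run_bound.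
apply/hasP => -[o]; rewrite mem_iota add0n size_map size_run => /andP [_ lt_ol].
case/andP => le_ow.
rewrite occurs_at_std ?uniq_run ?size_run // => occ_run.
have occ : occurs_at w1 s (t + o).
  suff <- : occurs_at w1 run o = occurs_at w1 s (t + o) by [].
  apply: eq_occurs_at => a b lt_a lt_b.
  by rewrite !nth_take ?nth_drop ?addnA //; lia.
have inner : inner_occurrence w1 s (t + o).
  apply/and3P; split => //; first by lia.
  by apply/allP => i; rewrite mem_iota => lt_i; apply: (@run_length_nonrecord s t); lia.
have lt_tos : t + o < size s by lia.
move/allP: av => /(_ (t + o)); rewrite mem_iota add0n lt_tos => /(_ isT).
by rewrite (run_start_in_run start) ?ltnn ?inner //; lia.
Qed.

Lemma rearranged_run_avoid2 o : mixed_avoid w1 w2 t s -> o + size w2 <= l ->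
  ~~ occurs_at w2 (rearrange_run t s) (t + o).
Proof.
move=> av le_o; have std_run_perms := std_perms uniq_run.
rewrite (_ : occurs_at _ _ _ = occurs_at w2 (std_map tr run) o); last first.
  by apply: eq_occurs_at => a b lt_a lt_b; rewrite -!addnA !nth_rearrange_run_in //; lia.
rewrite occurs_at_std_map ?uniq_run ?transfer_std_perm ?uniq_run ?size_run //.
have /andP [_] := transferP count_avoid std_run_perms (avoid1_std_run av).
have size_tr : size (tr (std run)) = l.
  by rewrite (perm_size (transfer_std_perm uniq_run)) size_iota size_run.
move/hasPn => /(_ o); rewrite mem_iota add0n size_tr le_o /=.
by apply; lia.
Qed.

End AtRun.

Lemma record_rearrange_run s t : uniq s -> record (rearrange_run t s) =1 record s.
Proof.
move=> us; case start_t: (starts_run s t && (t < size s)).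
  exact: record_rearrange_run_at.
by rewrite /rearrange_run start_t.
Qed.

Lemma perm_rearrange_run s t : uniq s -> perm_eq (rearrange_run t s) s.
Proof.
move=> us; case start_t: (starts_run s t && (t < size s)); last by rewrite /rearrange_run start_t.
rewrite rearrange_runE // [X in perm_eq _ X](run_decomp s t) perm_cat2l perm_cat2r.
by rewrite std_map_transfer_perm // uniq_run.
Qed.

Lemma nth_rearrange_run_other s t i : uniq s -> run_start s i != t ->
  nth 0 (rearrange_run t s) i = nth 0 s i.
Proof.
move=> us run_i; case start_t: (starts_run s t && (t < size s));
  last by rewrite /rearrange_run start_t.
apply: nth_rearrange_run_out => //; case: (ltnP i t) => [|le_ti]; [by left | right].
rewrite leqNgt; apply: contra run_i => lt_i.
by rewrite (run_start_in_run (proj1 (andP start_t))) ?le_ti.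
Qed.

Lemma rearrange_mixed_avoid s t : uniq s -> mixed_avoid w1 w2 t s ->
  mixed_avoid w1 w2 t.+1 (rearrange_run t s).
Proof.
move=> us av; have rec_eq := record_rearrange_run t us.
have size_eq : size (rearrange_run t s) = size s by rewrite (perm_size (perm_rearrange_run t us)).
apply/allP => j; rewrite mem_iota add0n size_eq => /andP [_ lt_js].
rewrite (eq_run_start rec_eq); apply/negP.
set W := (if run_start s j < t.+1 then w2 else w1) => occ.
have nonrec a : a < size W -> ~~ record s (j + a).
  by move=> lt_a; rewrite -rec_eq (inner_occurrence_nonrecord occ).
have le_jW : j + size W <= size s by case/and3P: occ; rewrite size_eq.
have same_run := run_start_nonrecord_block nonrec.
have [run_j|run_j] := eqVneq (run_start s j) t.
  have start_t : starts_run s t && (t < size s).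
    by rewrite -run_j starts_run_start (leq_ltn_trans (run_start_leq s j)).
  have EW : W = w2 by rewrite /W run_j ltnSn.
  have le_tj : t <= j by rewrite -run_j run_start_leq.
  have lt_end : j + (size w2).-1 < t + run_length s t.
    apply: nonrecord_in_run; first by case/andP: start_t.
      by apply: nonrec; rewrite EW; lia.
    by rewrite same_run ?run_j // EW; lia.
  case/and3P: occ => _ _; rewrite EW -(subnKC le_tj).
  by apply/negP/rearranged_run_avoid2 => //; lia.
have EW : W = if run_start s j < t then w2 else w1.
  by rewrite /W ltnS leq_eqVlt (negbTE run_j).
move: occ; rewrite EW (eq_inner_occurrence (y := s)) //.
  by apply/negP; move/allP: av => /(_ j); rewrite mem_iota add0n lt_js; exact.
by move=> a lt_a; apply: nth_rearrange_run_other; rewrite // same_run // EW.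
Qed.

Lemma rearrange_run_inj s1 s2 t : uniq s1 -> uniq s2 ->
  mixed_avoid w1 w2 t s1 -> mixed_avoid w1 w2 t s2 ->
  rearrange_run t s1 = rearrange_run t s2 -> s1 = s2.
Proof.
move=> u1 u2 av1 av2 E.
have rec12 : record s1 =1 record s2.
  by move=> i; rewrite -(record_rearrange_run t u1) -(record_rearrange_run t u2) E.
have size12 : size s1 = size s2.
  by rewrite -(perm_size (perm_rearrange_run t u1)) -(perm_size (perm_rearrange_run t u2)) E.
have start12 : (starts_run s1 t && (t < size s1)) = (starts_run s2 t && (t < size s2)).
  by rewrite /starts_run rec12 size12.
have len12 : run_length s1 t = run_length s2 t by apply: eq_run_length.
case start1: (starts_run s1 t && (t < size s1)); last first.
  by move: E; rewrite /rearrange_run start1 -start12 start1.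
have start2 : starts_run s2 t && (t < size s2) by rewrite -start12.
have [size_tr1 size_tr2] := (perm_size (std_map_transfer_perm (@uniq_run s1 t u1)),
                             perm_size (std_map_transfer_perm (@uniq_run s2 t u2))).
move/eqP: E; rewrite !rearrange_runE // eqseq_cat ?size_take_start // => /andP [/eqP Epre].
rewrite eqseq_cat; last by rewrite size_tr1 size_tr2 !size_run // len12.
case/andP => /eqP Erun /eqP Esuf.
have := std_map_transfer_inj (@uniq_run s1 t u1) (@uniq_run s2 t u2)
  (@avoid1_std_run s1 t u1 start1 av1) (@avoid1_std_run s2 t u2 start2 av2) Erun.
by move=> Er; rewrite [LHS](run_decomp s1 t) [RHS](run_decomp s2 t) Epre Esuf Er.
Qed.

End RearrangeRun.

Definition inner_avoid w s := ~~ has (inner_occurrence w s) (iota 0 (size s)).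

Lemma mixed_avoid0 w1 w2 s : mixed_avoid w1 w2 0 s = inner_avoid w1 s.
Proof. by rewrite /mixed_avoid /inner_avoid -all_predC. Qed.

Lemma mixed_avoid_size w1 w2 s : mixed_avoid w1 w2 (size s) s = inner_avoid w2 s.
Proof.
rewrite /mixed_avoid /inner_avoid -all_predC; apply: eq_in_all => j.
rewrite mem_iota add0n => /andP [_ lt_j].
by rewrite /= (leq_ltn_trans (run_start_leq s j) lt_j).
Qed.

Lemma count_inner_avoid_leq w1 w2 : 0 < size w2 ->
  (forall l, count (consec_avoid w1) (perms l) <=
             count (consec_avoid w2) (perms l)) ->
  forall n, count (inner_avoid w1) (perms n) <= count (inner_avoid w2) (perms n).
Proof.
move=> w2_gt0 count_avoid n.
have step t : count (mixed_avoid w1 w2 t) (perms n) <= count (mixed_avoid w1 w2 t.+1) (perms n).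
  apply: (count_leq_inj (f := rearrange_run w1 w2 t)); first exact: permutations_uniq.
    move=> s sP av; have us := perms_uniq sP; apply/andP; split.
      by move: sP; rewrite !mem_permutations; apply: perm_trans; exact: perm_rearrange_run.
    exact: rearrange_mixed_avoid.
  move=> s1 s2 /andP [s1P av1] /andP [s2P av2].
  exact: rearrange_run_inj (perms_uniq s1P) (perms_uniq s2P) av1 av2.
have E0 : count (inner_avoid w1) (perms n) = count (mixed_avoid w1 w2 0) (perms n).
  by apply: eq_count => s; rewrite mixed_avoid0.
have En : count (inner_avoid w2) (perms n) = count (mixed_avoid w1 w2 n) (perms n).
  by apply: eq_in_count => s sP; rewrite -(perms_size sP) mixed_avoid_size.
rewrite E0 En; elim: {2}n => // t IH; exact: leq_trans IH (step t).
Qed.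

Definition line n (p : 'S_n) : seq nat := [seq val (p i) | i <- enum 'I_n].

Lemma size_line n (p : 'S_n) : size (line p) = n.
Proof. by rewrite size_map size_enum_ord. Qed.

Lemma nth_line n (p : 'S_n) (i : 'I_n) : nth 0 (line p) i = p i.
Proof. by rewrite /line (nth_map i) ?size_enum_ord // nth_ord_enum. Qed.

Lemma line_inj n : injective (@line n).
Proof. by move=> p1 p2 E; apply/permP => i; apply: ord_inj; rewrite -!nth_line E. Qed.

Lemma line_perms n (p : 'S_n) : line p \in perms n.
Proof.
rewrite mem_permutations; apply: uniq_perm; last first.
- move=> x; rewrite mem_iota add0n /=; apply/mapP/idP => [[i _ ->]|lt_xn].
    exact: ltn_ord.
  by exists (p^-1 (Ordinal lt_xn))%g; rewrite ?mem_enum ?permKV.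
- exact: iota_uniq.
- by rewrite map_inj_uniq ?enum_uniq // => i j /val_inj; exact: perm_inj.
Qed.

Lemma card_perms n (Q : pred (seq nat)) : #|[set p : 'S_n | Q (line p)]| = count Q (perms n).
Proof.
have uniq_lines : uniq [seq line p | p <- enum 'S_n].
  by rewrite map_inj_uniq ?enum_uniq //; exact: line_inj.
have lines_perms : {subset [seq line p | p <- enum 'S_n] <= perms n}.
  by move=> x /mapP [p _ ->]; exact: line_perms.
have size_lines : size (perms n) <= size [seq line p | p <- enum 'S_n].
  by rewrite size_map -cardE card_Sn size_permutations ?iota_uniq // size_iota.
have [_ lines_eq] := uniq_min_size uniq_lines lines_perms size_lines.
rewrite cardsE cardE /enum_mem size_filter -enumT.
rewrite (_ : count _ _ = count Q [seq line p | p <- enum 'S_n]); last by rewrite count_map.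
by apply/seq.permP; apply: uniq_perm => //; exact: permutations_uniq.
Qed.

Lemma gcontainsP (P : gpat) n (p : 'S_n) :
  gcontains P p <-> exists g : nat -> nat, [/\ forall a, a < size P.1 -> g a < n,
    forall a b, a < b -> b < size P.1 -> g a < g b,
    forall a b, a < size P.1 -> b < size P.1 ->
      (nth 0 (line p) (g a) < nth 0 (line p) (g b)) = (nth 0 P.1 a < nth 0 P.1 b) &
    forall a, a.+1 < size P.1 -> ~~ nth true P.2 a -> g a.+1 = (g a).+1].
Proof.
split.
  case/existsP => f /andP [/forallP f_occ /forallP f_adj].
  pose g a := if insub a is Some o then val (f o) else 0.
  have gE a (lt_a : a < size P.1) : g a = f (Ordinal lt_a) by rewrite /g insubT.
  exists g; split.
  - by move=> a lt_a; rewrite gE.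
  - move=> a b lt_ab lt_b; have lt_a := ltn_trans lt_ab lt_b.
    have /forallP /(_ (Ordinal lt_b)) /andP [/implyP /(_ lt_ab) + _] := f_occ (Ordinal lt_a).
    by rewrite gE (gE b).
  - move=> a b lt_a lt_b.
    have /forallP /(_ (Ordinal lt_b)) /andP [_ /eqP <-] := f_occ (Ordinal lt_a).
    by rewrite (gE a lt_a) (gE b lt_b) !nth_line.
  - move=> a lt_a1 nodash; have lt_a := ltn_trans (ltnSn a) lt_a1.
    have /forallP /(_ (Ordinal lt_a1)) /implyP := f_adj (Ordinal lt_a).
    by rewrite /= eqxx nodash => /(_ isT) /eqP; rewrite (gE a lt_a) (gE _ lt_a1).
case=> g [g_lt g_mono g_occ g_adj].
apply/existsP; exists [ffun o : 'I_(size P.1) => Ordinal (g_lt o (ltn_ord o))].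
apply/andP; split; apply/forallP => a; apply/forallP => b; rewrite !ffunE /=.
  apply/andP; split; first by apply/implyP => lt_ab; exact: g_mono.
  apply/eqP; have := g_occ a b (ltn_ord a) (ltn_ord b).
  rewrite -(nth_line p (Ordinal (g_lt a (ltn_ord a)))).
  by rewrite -(nth_line p (Ordinal (g_lt b (ltn_ord b)))).
apply/implyP => /andP [/eqP Eb nodash]; apply/eqP.
by have lt_b := ltn_ord b; rewrite Eb in lt_b *; exact: g_adj.
Qed.

Lemma size_oneline m (s : 'S_m) : size (oneline s) = m.
Proof. by rewrite size_map size_enum_ord. Qed.

Lemma nth_oneline_bounds m (s : 'S_m) a : a < m -> 0 < nth 0 (oneline s) a <= m.
Proof. by move=> lt_am; rewrite /oneline (nth_map (Ordinal lt_am)) ?size_enum_ord //=. Qed.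

Lemma gcontains_consec m (sg : 'S_m) n (p : 'S_n) : 0 < m ->
  gcontains (consec_pat sg) p = ccontains (oneline sg) (line p).
Proof.
move=> m_gt0; apply/idP/idP.
  move/gcontainsP => [g]; rewrite /= size_oneline => -[g_lt g_mono g_occ g_adj].
  have gE a : a < m -> g a = g 0 + a.
    elim: a => [|a IH] lt_am; first by rewrite addn0.
    rewrite g_adj // ?IH ?addnS //; [lia | rewrite nth_nseq; case: ifP => //; lia].
  apply/hasP; exists (g 0); first by rewrite mem_iota add0n size_line g_lt.
  apply/andP; split; first by rewrite size_oneline size_line; have := g_lt m.-1; rewrite gE; lia.
  rewrite /occurs_at size_oneline; apply/allP => a; rewrite mem_iota add0n => /andP [_ lt_a].
  apply/allP => b; rewrite mem_iota add0n => /andP [_ lt_b].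
  by rewrite -!gE // g_occ.
case/hasP => j _ /andP [le_j occ]; rewrite size_oneline in le_j.
apply/gcontainsP; exists (fun a => j + a); rewrite /= size_oneline; split.
- by move=> a lt_a; rewrite -(size_line p); lia.
- by move=> a b lt_ab _; lia.
- move=> a b lt_a lt_b; move/allP: occ => /(_ a); rewrite mem_iota size_oneline lt_a.
  by move=> /(_ isT) /allP /(_ b); rewrite mem_iota lt_b => /(_ isT) /eqP.
- by move=> a _ _; rewrite addnS.
Qed.

Lemma nth_dashes_end c b : nth true (nseq c false ++ [:: true]) b = (c <= b).
Proof.
rewrite nth_cat size_nseq nth_nseq; case: ltnP => // le_cb.
by case: (b - c) => [|[|x]].
Qed.

Section WrapPattern.
Variables (k : nat) (sg : 'S_(k - 2)) (n : nat) (p : 'S_n).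
Hypothesis k_gt2 : 2 < k.
Local Notation m := (k - 2).
Local Notation w := (oneline sg).
Local Notation W := (wrap_pat sg).1.
Local Notation s := (line p).

Lemma size_wrap_pat : size W = m.+2.
Proof. by rewrite /= size_cat size_map size_oneline addn1. Qed.

Lemma nth_wrap_pat_mid a : a < m -> nth 0 W a.+1 = (nth 0 w a).+1.
Proof.
by move=> lt_am; rewrite /= nth_cat size_map size_oneline lt_am (nth_map 0) ?size_oneline.
Qed.

Lemma nth_wrap_pat_last : nth 0 W m.+1 = m.+2.
Proof. by rewrite /= nth_cat size_map size_oneline ltnn subnn /=; lia. Qed.

Lemma nth_wrap_pat_dash a : nth true (wrap_pat sg).2 a.+1 = (m.-1 <= a).
Proof. by rewrite /= nth_dashes_end; congr (_ <= _); lia. Qed.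

Lemma wrap_pat_mid_bounds a : a < m -> 1 < nth 0 W a.+1 < m.+2.
Proof. by move=> lt_am; rewrite nth_wrap_pat_mid // !ltnS; exact: nth_oneline_bounds. Qed.

Lemma gcontains_wrap_inner : gcontains (wrap_pat sg) p -> has (inner_occurrence w s) (iota 0 n).
Proof.
move/gcontainsP => [g]; rewrite size_wrap_pat => -[g_lt g_mono g_occ g_adj].
have gE a : a < m -> g a.+1 = g 1 + a.
  elim: a => [|a IH] lt_am; first by rewrite addn0.
  rewrite g_adj ?nth_wrap_pat_dash ?IH ?addnS //; lia.
set j := g 1 in gE *.
have gm : g m = j + m.-1 by rewrite -gE; [rewrite prednK //; lia | lia].
have [lt_0j lt_m_last] : g 0 < j /\ g m < g m.+1 by split; apply: g_mono.
have lt_last_n : g m.+1 < n by apply: g_lt.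
have first_below a : a < m -> nth 0 s (g 0) < nth 0 s (j + a).
  move=> lt_am; rewrite -gE // g_occ //; last by lia.
  by case/andP: (wrap_pat_mid_bounds lt_am).
have last_above a : a < m -> nth 0 s (j + a) < nth 0 s (g m.+1).
  move=> lt_am; rewrite -gE // g_occ //; last by lia.
  by rewrite nth_wrap_pat_last; case/andP: (wrap_pat_mid_bounds lt_am).
apply/hasP; exists j; first by rewrite mem_iota add0n; lia.
apply/and3P; split.
- by rewrite size_oneline size_line; lia.
- apply/allP => i; rewrite mem_iota size_oneline => /andP [le_ji lt_i].
  rewrite -(subnKC le_ji) /record negb_or; apply/andP; split.
    have first_in : nth 0 s (g 0) \in take (j + (i - j)) s.
      by apply: mem_take_nth; rewrite ?size_line; lia.
    by apply/negP => /allP /(_ _ first_in); rewrite ltnNge ltnW // first_below //; lia.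
  have last_in : nth 0 s (g m.+1) \in drop (j + (i - j)).+1 s.
    by apply: mem_drop_nth; rewrite ?size_line; lia.
  by apply/negP => /allP /(_ _ last_in); rewrite ltnNge ltnW // last_above //; lia.
- rewrite /occurs_at size_oneline; apply/allP => a; rewrite mem_iota add0n => /andP [_ lt_a].
  apply/allP => b; rewrite mem_iota add0n => /andP [_ lt_b].
  by rewrite -!gE // g_occ ?nth_wrap_pat_mid ?ltnS //; lia.
Qed.

Lemma inner_gcontains_wrap : has (inner_occurrence w s) (iota 0 n) -> gcontains (wrap_pat sg) p.
Proof.
case/hasP => j _ /and3P []; rewrite size_oneline size_line => le_jn nonrec occ.
have m_gt0 : 0 < m by lia.
have nonrec_window i : j <= i < j + m -> ~~ record s i.
  by move=> lt_i; move/allP: nonrec; apply; rewrite mem_iota.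
have le_window : j + m <= size s by rewrite size_line.
have [q0 [q1 [lt_q0 /andP [le_q1 lt_q1] first_below last_above]]] :=
  nonrecord_window_enclosed (perms_uniq (line_perms p)) m_gt0 le_window nonrec_window.
rewrite size_line in lt_q1.
pose g a := if a == 0 then q0 else if a <= m then j + a.-1 else q1.
have g0 : g 0 = q0 by [].
have g_mid a : a < m -> g a.+1 = j + a by move=> lt_a; rewrite /g /= lt_a.
have g_last : g m.+1 = q1 by rewrite /g /= ltnn.
have g_cases a : a < m.+2 -> a = 0 \/ (exists2 b, a = b.+1 & b < m) \/ a = m.+1.
  case: a => [|a] lt_a; [by left | right].
  by case: (ltnP a m) => le_a; [left; exists a | right; congr _.+1; lia].
apply/gcontainsP; exists g; rewrite size_wrap_pat; split.
- by move=> a /g_cases [->|[[b -> lt_b]|->]]; rewrite ?g0 ?g_last ?g_mid //; lia.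
- move=> a b lt_ab lt_b; have lt_a : a < m.+2 by lia.
  by case/g_cases: lt_a => [Ea|[[a' Ea lt_a']|Ea]]; case/g_cases: lt_b => [Eb|[[b' Eb lt_b']|Eb]];
    subst a b; rewrite ?g0 ?g_last ?g_mid //; lia.
- move=> a b /g_cases [->|[[a' -> lt_a]|->]] /g_cases [->|[[b' -> lt_b]|->]];
    rewrite ?g0 ?g_last ?g_mid ?nth_wrap_pat_last ?nth_wrap_pat_mid //.
  + by rewrite !ltnn.
  + by rewrite first_below // ltnS; case/andP: (nth_oneline_bounds sg lt_b).
  + by rewrite (ltn_trans (first_below 0 m_gt0) (last_above 0 m_gt0)).
  + by rewrite ltnNge ltnW ?first_below.
  + rewrite ltnS; move/allP: occ => /(_ a'); rewrite mem_iota add0n size_oneline lt_a.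
    by move=> /(_ isT) /allP /(_ b'); rewrite mem_iota add0n lt_b => /(_ isT) /eqP ->.
  + by rewrite last_above // ltnS; case/andP: (nth_oneline_bounds sg lt_a).
  + by rewrite ltnNge ltnW // (ltn_trans (first_below 0 m_gt0) (last_above 0 m_gt0)).
  + rewrite ltnNge ltnW ?last_above //; symmetry; apply/negbTE; rewrite -leqNgt.
    by have := nth_oneline_bounds sg lt_b; lia.
  + by rewrite !ltnn.
- move=> [|a] lt_a; first by [].
  by rewrite nth_wrap_pat_dash -ltnNge => lt_am; rewrite !g_mid ?addnS //; lia.
Qed.

Lemma gcontains_wrap : gcontains (wrap_pat sg) p = has (inner_occurrence w s) (iota 0 n).
Proof. by apply/idP/idP; [exact: gcontains_wrap_inner | exact: inner_gcontains_wrap]. Qed.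

End WrapPattern.

Lemma egf_eq (P Q : gpat) : egf P = egf Q <-> alpha P =1 alpha Q.
Proof.
split=> [E l|E]; last by apply: functional_extensionality => l; rewrite /egf E.
have fact_neq0 : ((l`!)%:R != 0 :> rat)%R by rewrite Num.Theory.pnatr_eq0 -lt0n fact_gt0.
have /(congr1 (fun x => (x * (l`!)%:R)%R)) := congr1 (fun f => f l) E.
by rewrite /egf !(GRing.mulfVK fact_neq0) => /eqP; rewrite Num.Theory.eqr_nat => /eqP.
Qed.

Lemma alpha_count (P : gpat) n (Q : pred (seq nat)) :
  (forall p : 'S_n, gcontains P p = Q (line p)) -> alpha P n = count (predC Q) (perms n).
Proof. by move=> PQ; rewrite /alpha -card_perms; apply: eq_card => p; rewrite !inE PQ. Qed.

Lemma alpha_consec m (sg : 'S_m) n : 0 < m ->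
  alpha (consec_pat sg) n = count (consec_avoid (oneline sg)) (perms n).
Proof. by move=> m_gt0; apply: alpha_count => p; rewrite gcontains_consec. Qed.

Lemma alpha_wrap k (sg : 'S_(k - 2)) n : 2 < k ->
  alpha (wrap_pat sg) n = count (inner_avoid (oneline sg)) (perms n).
Proof.
move=> k_gt2.
rewrite (alpha_count (Q := fun s => has (inner_occurrence (oneline sg) s) (iota 0 n))).
  by apply: eq_in_count => s sP; rewrite /inner_avoid (perms_size sP).
by move=> p; rewrite gcontains_wrap.
Qed.

Lemma egf_wrap_pat_congr k : 3 <= k -> forall sigma tau : 'S_(k - 2),
  egf (consec_pat sigma) = egf (consec_pat tau) -> egf (wrap_pat sigma) = egf (wrap_pat tau).
Proof.
move=> k_ge3 sigma tau /egf_eq E; apply/egf_eq => n.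
have m_gt0 : 0 < k - 2 by lia.
have [s_gt0 t_gt0] : 0 < size (oneline sigma) /\ 0 < size (oneline tau) by rewrite !size_oneline.
have count_eq l : count (consec_avoid (oneline sigma)) (perms l) =
                  count (consec_avoid (oneline tau)) (perms l).
  by rewrite -!alpha_consec.
rewrite !alpha_wrap //; apply/eqP; rewrite eqn_leq.
by rewrite !count_inner_avoid_leq // => l; rewrite count_eq.
Qed.

Definition compl (q : seq nat) := [seq (size q).-1 - x | x <- q].

Lemma mem_perms q l : q \in perms l -> forall x, (x \in q) = (x < l).
Proof. by rewrite mem_permutations => /perm_mem qE x; rewrite qE mem_iota. Qed.

Lemma complK l q : q \in perms l -> compl (compl q) = q.
Proof.
move=> qP; rewrite /compl size_map -map_comp (perms_size qP); apply: map_id_in => x /=.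
by rewrite (mem_perms qP); lia.
Qed.

Lemma compl_perms l q : q \in perms l -> compl q \in perms l.
Proof.
move=> qP; rewrite mem_permutations /compl (perms_size qP); apply: uniq_perm.
- by rewrite map_inj_in_uniq ?(perms_uniq qP) // => x y; rewrite !(mem_perms qP); lia.
- exact: iota_uniq.
move=> x; rewrite mem_iota add0n; apply/mapP/idP => [[y + ->]|lt_xl].
  by rewrite (mem_perms qP); lia.
by exists (l.-1 - x); rewrite ?(mem_perms qP); lia.
Qed.

Lemma perm_map_compl l : perm_eq [seq compl q | q <- perms l] (perms l).
Proof.
apply: uniq_perm; last 1 first.
- move=> q; apply/mapP/idP => [[q' q'P ->]|qP]; first exact: compl_perms.
  by exists (compl q); rewrite ?compl_perms ?(complK qP).
- rewrite map_inj_in_uniq ?permutations_uniq // => x y xP yP E.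
  by rewrite -(complK xP) E (complK yP).
- exact: permutations_uniq.
Qed.

Lemma ccontains_compl l q : q \in perms l -> ccontains [:: 2; 1] (compl q) = ccontains [:: 1; 2] q.
Proof.
move=> qP; rewrite /ccontains /compl size_map; apply: eq_in_has => j _ /=.
case: (ltnP (size q) (j + 2)) => // le_j.
have lt_jq a : a < 2 -> j + a < size q by move=> lt_a; apply: leq_trans le_j; rewrite ltn_add2l.
have lt_q a : a < 2 -> nth 0 q (j + a) < size q.
  by move=> lt_a; rewrite [X in _ < X](perms_size qP) -(mem_perms qP) mem_nth ?lt_jq.
rewrite /occurs_at /= !(nth_map 0) ?lt_jq // !addn0.
move: (lt_q 0 isT) (lt_q 1 isT); rewrite !addn0.
move: (nth 0 q j) (nth 0 q (j + 1)) => u v lt_u lt_v.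
have -> : ((size q).-1 - u < (size q).-1 - v) = (v < u) by apply/idP/idP; lia.
have -> : ((size q).-1 - v < (size q).-1 - u) = (u < v) by apply/idP/idP; lia.
by rewrite !ltnn; case: (v < u); case: (u < v).
Qed.

Lemma count_avoid12_avoid21 l : count (consec_avoid [:: 1; 2]) (perms l) =
                                count (consec_avoid [:: 2; 1]) (perms l).
Proof.
rewrite -[in RHS](seq.permP (perm_map_compl l)) count_map; apply: eq_in_count => q qP /=.
by rewrite /consec_avoid (ccontains_compl qP).
Qed.

Lemma enum_ord2 : enum 'I_(4 - 2) = [:: ord0; ord_max].
Proof. by apply: (inj_map val_inj); rewrite val_enum_ord. Qed.

Lemma oneline_id2 : oneline (1 : 'S_(4 - 2)) = [:: 1; 2].
Proof. by rewrite /oneline enum_ord2 /= !perm1. Qed.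

Lemma oneline_swap2 : oneline (tperm (ord0 : 'I_(4 - 2)) ord_max) = [:: 2; 1].
Proof. by rewrite /oneline enum_ord2 /= tpermL tpermR. Qed.

Theorem mainTheorem14 :
  (forall (k : nat), (3 <= k)%N ->
    forall sigma tau : 'S_(k - 2),
      egf (consec_pat sigma) = egf (consec_pat tau) ->
      egf (wrap_pat sigma) = egf (wrap_pat tau)) /\
  egf ([:: 1; 2; 3; 4], [:: true; false; true]) =
  egf ([:: 1; 3; 2; 4], [:: true; false; true]).
Proof.
split; first exact: egf_wrap_pat_congr.
have -> : ([:: 1; 2; 3; 4], [:: true; false; true]) = wrap_pat (1 : 'S_(4 - 2)).
  by rewrite /wrap_pat oneline_id2.
have -> : ([:: 1; 3; 2; 4], [:: true; false; true]) = wrap_pat (tperm (ord0 : 'I_(4 - 2)) ord_max).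
  by rewrite /wrap_pat oneline_swap2.
apply: egf_wrap_pat_congr => //; apply/egf_eq => l.
by rewrite !alpha_consec // oneline_id2 oneline_swap2 count_avoid12_avoid21.
Qed.
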